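(* Let $\lambda_C$ and $\mathrm{VFS}$ be the calculi and $M\mapsto M^{\bullet}$ the VFS-translation described in the context. (1) Let $R\in\{B,\mathit{let}_v,\eta_{let}\}$. If $M\to_R N$ in $\lambda_C$ (one step of the compatible closure of rule $R$), then $M^{\bullet}\twoheadrightarrow N^{\bullet}$ in $\mathrm{VFS}$. (2) Let $R\in\{\mathit{let}_1,\mathit{let}_2,\mathit{assoc}\}$. If $M\to_R N$ in $\lambda_C$, then $M^{\bullet}= N^{\bullet}$ (syntactic equality up to $\alpha$-conversion) in $\mathrm{VFS}$.
   Context: All calculi below are untyped term calculi considered up to $\alpha$-conversion; $[V/x]M$ denotes capture-avoiding substitution; a one-step reduction relation $\to$ is the closure of the listed rules under all term constructors, and $\twoheadrightarrow$ is its reflexive-transitive closure. The computational $\lambda$-calculus $\lambda_C$: terms $M,N,P,Q::= V\mid MN\mid \mathsf{let}\,x:=M\,\mathsf{in}\,N$ (binding $x$ in $N$), values $V,W::=x\mid \lambda x.M$. Rules: $(B)$ $(\lambda x.M)N\to \mathsf{let}\,x:=N\,\mathsf{in}\,M$; $(\mathit{let}_v)$ $\mathsf{let}\,x:=V\,\mathsf{in}\,M\to[V/x]M$; $(\eta_{let})$ $\mathsf{let}\,x:=M\,\mathsf{in}\,x\to M$; $(\mathit{assoc})$ $\mathsf{let}\,y:=(\mathsf{let}\,x:=M\,\mathsf{in}\,N)\,\mathsf{in}\,P\to \mathsf{let}\,x:=M\,\mathsf{in}\,\mathsf{let}\,y:=N\,\mathsf{in}\,P$; $(\mathit{let}_1)$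 $MN\to\mathsf{let}\,x:=M\,\mathsf{in}\,xN$ if $M$ is not a value; $(\mathit{let}_2)$ $VN\to \mathsf{let}\,x:=N\,\mathsf{in}\,Vx$ if $N$ is not a value (with $x$ fresh). The calculus $\mathrm{VFS}$: terms $M,N::=\uparrow V\mid \mathsf{C}_v(V,c)$; values $V,W::=x\mid\lambda x.M$; formal contexts $c::= x.M\mid (W,x.M)$, where $x.M$ and $(W,x.M)$ bind $x$ in $M$. An auxiliary operation $\mathsf{C}_v(M:c')$ (a term) and $(c:c')$ (a formal context) is defined by simultaneous recursion: $\mathsf{C}_v(\uparrow V:c')=\mathsf{C}_v(V,c')$, $\mathsf{C}_v(\mathsf{C}_v(V,c):c')=\mathsf{C}_v(V,(c:c'))$, $((x.M):c')=x.\mathsf{C}_v(M:c')$, $((W,x.M):c')=(W,x.\mathsf{C}_v(M:c'))$. Rules: $(B_v)$ $\mathsf{C}_v(\lambda x.M,(V,y.N))\to \mathsf{C}_v(V,x.\mathsf{C}_v(M:y.N))$; $(\sigma_v)$ $\mathsf{C}_v(V,y.N)\to [V/y]N$. The VFS-translation from $\lambda_C$ to $\mathrm{VFS}$: $x^{\circ}=x$; $(\lambda x.M)^{\circ}=\lambda x.M^{\bullet}$; $M^{\bullet}=(M;x.\uparrow x)$; and for a $\lambda_C$-term $M$ and a $\mathrm{VFS}$-term $N$, the $\mathrm{VFS}$-term $(M;x.N)$ is defined by: $(V;x.N)=\mathsf{C}_v(V^{\circ},x.N)$; $(PQ;x.N)=(P;m.(mQ;x.N))$ if $P$ is not a value;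 $(VQ;x.N)=(Q;n.(Vn;x.N))$ if $Q$ is not a value; $(VW;x.N)=\mathsf{C}_v(V^{\circ},(W^{\circ},x.N))$; $(\mathsf{let}\,y:=M\,\mathsf{in}\,P;x.N)=(M;y.(P;x.N))$ (with $m,n$ fresh). *)

(* Terms are represented with de Bruijn indices, so syntactic
   equality of Rocq terms is equality up to alpha-conversion. *)
From Stdlib Require Import Arith Relations.

Inductive lterm : Type :=
| LVar : nat -> lterm
| LLam : lterm -> lterm
| LApp : lterm -> lterm -> lterm
| LLet : lterm -> lterm -> lterm.    (* let x := M in N, x = index 0 in N *)

Definition is_value (t : lterm) : bool :=
  match t with LVar _ | LLam _ => true | _ => false end.

Fixpoint lshift (c : nat) (t : lterm) : lterm :=
  match t with
  | LVar j => LVar (if j <? c then j else S j)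
  | LLam b => LLam (lshift (S c) b)
  | LApp p q => LApp (lshift c p) (lshift c q)
  | LLet m n => LLet (lshift c m) (lshift (S c) n)
  end.

Fixpoint lsubst (k : nat) (V : lterm) (t : lterm) : lterm :=
  match t with
  | LVar j => if j <? k then LVar j else if j =? k then V else LVar (pred j)
  | LLam b => LLam (lsubst (S k) (lshift 0 V) b)
  | LApp p q => LApp (lsubst k V p) (lsubst k V q)
  | LLet m n => LLet (lsubst k V m) (lsubst (S k) (lshift 0 V) n)
  end.

Inductive lrule : Type := RB | Rletv | Retalet | Rassoc | Rlet1 | Rlet2.

Inductive lroot : lrule -> lterm -> lterm -> Prop :=
| root_B : forall M N, lroot RB (LApp (LLam M) N) (LLet N M)
| root_letv : forall V M, is_value V = true -> lroot Rletv (LLet V M) (lsubst 0 V M)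
| root_eta : forall M, lroot Retalet (LLet M (LVar 0)) M
| root_assoc : forall M N P,
    lroot Rassoc (LLet (LLet M N) P) (LLet M (LLet N (lshift 1 P)))
| root_let1 : forall M N, is_value M = false ->
    lroot Rlet1 (LApp M N) (LLet M (LApp (LVar 0) (lshift 0 N)))
| root_let2 : forall V N, is_value V = true -> is_value N = false ->
    lroot Rlet2 (LApp V N) (LLet N (LApp (lshift 0 V) (LVar 0))).

Inductive lstep (R : lrule) : lterm -> lterm -> Prop :=
| ls_root : forall M N, lroot R M N -> lstep R M N
| ls_lam : forall M M', lstep R M M' -> lstep R (LLam M) (LLam M')
| ls_appl : forall M M' N, lstep R M M' -> lstep R (LApp M N) (LApp M' N)
| ls_appr : forall M N N', lstep R N N' -> lstep R (LApp M N) (LApp M N')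
| ls_letl : forall M M' N, lstep R M M' -> lstep R (LLet M N) (LLet M' N)
| ls_letr : forall M N N', lstep R N N' -> lstep R (LLet M N) (LLet M N').

Inductive vtm : Type :=
| Up : vval -> vtm
| Cv : vval -> vctx -> vtm
with vval : Type :=
| VVar : nat -> vval
| VLam : vtm -> vval
with vctx : Type :=
| CAbs : vtm -> vctx                 (* x.M, x = index 0 *)
| CPair : vval -> vtm -> vctx.       (* (W, x.M), x = index 0 in M *)

Fixpoint sh_tm (c : nat) (t : vtm) : vtm :=
  match t with
  | Up v => Up (sh_val c v)
  | Cv v k => Cv (sh_val c v) (sh_ctx c k)
  end
with sh_val (c : nat) (v : vval) : vval :=
  match v with
  | VVar j => VVar (if j <? c then j else S j)
  | VLam m => VLam (sh_tm (S c) m)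
  end
with sh_ctx (c : nat) (k : vctx) : vctx :=
  match k with
  | CAbs m => CAbs (sh_tm (S c) m)
  | CPair w m => CPair (sh_val c w) (sh_tm (S c) m)
  end.

Fixpoint su_tm (k : nat) (V : vval) (t : vtm) : vtm :=
  match t with
  | Up v => Up (su_val k V v)
  | Cv v c => Cv (su_val k V v) (su_ctx k V c)
  end
with su_val (k : nat) (V : vval) (v : vval) : vval :=
  match v with
  | VVar j => if j <? k then VVar j else if j =? k then V else VVar (pred j)
  | VLam m => VLam (su_tm (S k) (sh_val 0 V) m)
  end
with su_ctx (k : nat) (V : vval) (c : vctx) : vctx :=
  match c with
  | CAbs m => CAbs (su_tm (S k) (sh_val 0 V) m)
  | CPair w m => CPair (su_val k V w) (su_tm (S k) (sh_val 0 V) m)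
  end.

(* C_v(M : c') and (c : c'); c' is shifted when passing under the binder x *)
Fixpoint cat_tm (m : vtm) (c' : vctx) : vtm :=
  match m with
  | Up v => Cv v c'
  | Cv v c => Cv v (cat_ctx c c')
  end
with cat_ctx (c : vctx) (c' : vctx) : vctx :=
  match c with
  | CAbs m => CAbs (cat_tm m (sh_ctx 0 c'))
  | CPair w m => CPair w (cat_tm m (sh_ctx 0 c'))
  end.

Inductive vroot : vtm -> vtm -> Prop :=
| root_Bv : forall M V N,
    vroot (Cv (VLam M) (CPair V N)) (Cv V (CAbs (cat_tm M (sh_ctx 0 (CAbs N)))))
| root_sigmav : forall V N, vroot (Cv V (CAbs N)) (su_tm 0 V N).

Inductive vstep_tm : vtm -> vtm -> Prop :=
| vs_root : forall M N, vroot M N -> vstep_tm M N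
| vs_up : forall v v', vstep_val v v' -> vstep_tm (Up v) (Up v')
| vs_cvl : forall v v' c, vstep_val v v' -> vstep_tm (Cv v c) (Cv v' c)
| vs_cvr : forall v c c', vstep_ctx c c' -> vstep_tm (Cv v c) (Cv v c')
with vstep_val : vval -> vval -> Prop :=
| vs_lam : forall m m', vstep_tm m m' -> vstep_val (VLam m) (VLam m')
with vstep_ctx : vctx -> vctx -> Prop :=
| vs_abs : forall m m', vstep_tm m m' -> vstep_ctx (CAbs m) (CAbs m')
| vs_pairl : forall w w' m, vstep_val w w' -> vstep_ctx (CPair w m) (CPair w' m)
| vs_pairr : forall w m m', vstep_tm m m' -> vstep_ctx (CPair w m) (CPair w m').

Definition vstar : vtm -> vtm -> Prop := clos_refl_trans vtm vstep_tm.

Fixpoint lsize (t : lterm) : nat :=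
  match t with
  | LVar _ => 1
  | LLam b => S (lsize b)
  | LApp p q => S (lsize p + lsize q)
  | LLet m n => S (lsize m + lsize n)
  end.

(* tr n M N = (M; x.N) where N lives in the context extended by x (index 0),
   computed with fuel n; the fuel lsize M is always sufficient, see bullet. *)
Fixpoint tr (n : nat) (M : lterm) (N : vtm) : vtm :=
  match n with
  | O => N (* never reached with sufficient fuel *)
  | S n =>
    let vt (V : lterm) : vval :=
      match V with
      | LVar k => VVar k
      | LLam b => VLam (tr n b (Up (VVar 0)))
      | _ => VVar 0 (* unused: only applied to values *)
      end in
    match M with
    | LVar _ | LLam _ => Cv (vt M) (CAbs N)
    | LApp P Q =>
        if is_value P then
          if is_value Q then Cv (vt P) (CPair (vt Q) N)
          else (* (VQ; x.N) = (Q; n.(Vn; x.N)) *)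
            tr n Q (tr n (LApp (lshift 0 P) (LVar 0)) (sh_tm 1 N))
        else (* (PQ; x.N) = (P; m.(mQ; x.N)) *)
          tr n P (tr n (LApp (LVar 0) (lshift 0 Q)) (sh_tm 1 N))
    | LLet M1 P =>  (* (let y := M1 in P; x.N) = (M1; y.(P; x.N)) *)
        tr n M1 (tr n P (sh_tm 1 N))
    end
  end.

Definition bullet (M : lterm) : vtm := tr (lsize M) M (Up (VVar 0)).

(* The translation (M; x.K) is parametric in its continuation K, and the argument is about
   its interaction with K: it commutes with shifts and with substitution of values,
   C_v(_ : c) can be pushed into the continuation, and it is monotone in K for ->>.
   Since a non-value application is translated as its let_1/let_2-expansion, the rules
   let_1, let_2 and assoc translate to equal terms, whereas B becomes a B_v step followed by
   sigma_v steps, let_v a sigma_v step, and eta_let a sigma_v step in the continuation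
   x.C_v(x, y.K). Compatible closure then follows by induction up to let-expansion. *)
From Stdlib Require Import Relations Arith Lia Wf_nat.

Ltac index_cases :=
  repeat (cbn -[Nat.ltb Nat.eqb] in *; match goal with
  | |- context [?a <? ?b] => destruct (Nat.ltb_spec a b)
  | |- context [?a =? ?b] => destruct (Nat.eqb_spec a b)
  end).

Ltac solve_index :=
  index_cases; try reflexivity; try (f_equal; lia); try (exfalso; lia); try (subst; reflexivity).

Lemma lshift_lshift t c c' : c' <= c -> lshift (S c) (lshift c' t) = lshift c' (lshift c t).
Proof.
  revert c c'; induction t; intros c c' Hc; cbn -[Nat.ltb]; [solve_index| ..];
    f_equal; first [apply IHt | apply IHt1 | apply IHt2]; lia.
Qed.

Lemma lsubst_lshift t k V : lsubst k V (lshift k t) = t.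
Proof. revert k V; induction t; intros; cbn -[Nat.ltb]; [solve_index| ..]; f_equal; auto. Qed.

Lemma lsubst_var_lshift t k : lsubst k (LVar k) (lshift (S k) t) = t.
Proof. revert k; induction t; intros; cbn -[Nat.ltb Nat.eqb]; [solve_index| ..]; f_equal; auto. Qed.

Lemma lshift_lsubst_le P c k V :
  c <= k -> lshift c (lsubst k V P) = lsubst (S k) (lshift c V) (lshift c P).
Proof.
  revert c k V; induction P as [j | b IHb | P IHP Q IHQ | P IHP Q IHQ]; intros c k V Hck;
    cbn -[Nat.ltb Nat.eqb]; [solve_index | | | ]; f_equal; auto;
    [rewrite IHb | rewrite IHQ]; try lia; f_equal; apply lshift_lshift; lia.
Qed.

Lemma lshift_lsubst_ge M c k V :
  k <= c -> lshift c (lsubst k V M) = lsubst k (lshift c V) (lshift (S c) M).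
Proof.
  revert c k V; induction M as [j | b IHb | M IHM N IHN | M IHM N IHN]; intros c k V Hkc;
    cbn -[Nat.ltb Nat.eqb]; [solve_index | | | ]; f_equal; auto;
    [rewrite IHb | rewrite IHN]; try lia; f_equal; apply lshift_lshift; lia.
Qed.

Lemma lsize_pos t : 1 <= lsize t.
Proof. destruct t; cbn; lia. Qed.

Lemma lsize_lshift t c : lsize (lshift c t) = lsize t.
Proof. revert c; induction t; intros; cbn; auto. Qed.

Lemma lsize_nonvalue t : is_value t = false -> 3 <= lsize t.
Proof.
  destruct t as [| | P Q | P Q]; cbn; intros; try discriminate;
    pose proof (lsize_pos P); pose proof (lsize_pos Q); lia.
Qed.

Lemma is_value_lshift t c : is_value (lshift c t) = is_value t.
Proof. destruct t; reflexivity. Qed.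

Lemma is_value_lsubst t k V : is_value V = true -> is_value (lsubst k V t) = is_value t.
Proof. destruct t; intros; cbn -[Nat.ltb Nat.eqb]; auto. index_cases; auto. Qed.

Scheme vtm_mut_ind := Induction for vtm Sort Prop
with vval_mut_ind := Induction for vval Sort Prop
with vctx_mut_ind := Induction for vctx Sort Prop.
Combined Scheme vsyntax_ind from vtm_mut_ind, vval_mut_ind, vctx_mut_ind.

Ltac rewrite_hyps :=
  repeat match goal with H : forall _, _ |- _ => rewrite H by lia; clear H end.

Lemma sh_comm :
  (forall t c c', c' <= c -> sh_tm (S c) (sh_tm c' t) = sh_tm c' (sh_tm c t)) /\
  (forall v c c', c' <= c -> sh_val (S c) (sh_val c' v) = sh_val c' (sh_val c v)) /\
  (forall k c c', c' <= c -> sh_ctx (S c) (sh_ctx c' k) = sh_ctx c' (sh_ctx c k)).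
Proof.
  apply vsyntax_ind; intros; cbn -[Nat.ltb]; try solve_index; f_equal; rewrite_hyps; reflexivity.
Qed.

Definition sh_tm_comm := proj1 sh_comm.
Definition sh_val_comm := proj1 (proj2 sh_comm).
Definition sh_ctx_comm := proj2 (proj2 sh_comm).

Lemma sh_su :
  (forall t c k W, k <= c -> sh_tm c (su_tm k W t) = su_tm k (sh_val c W) (sh_tm (S c) t)) /\
  (forall v c k W, k <= c -> sh_val c (su_val k W v) = su_val k (sh_val c W) (sh_val (S c) v)) /\
  (forall e c k W, k <= c -> sh_ctx c (su_ctx k W e) = su_ctx k (sh_val c W) (sh_ctx (S c) e)).
Proof.
  apply vsyntax_ind; intros; cbn -[Nat.ltb Nat.eqb]; try solve_index; f_equal;
    rewrite_hyps; try rewrite sh_val_comm by lia; reflexivity.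
Qed.

Lemma su_sh_le :
  (forall t c k W, c <= k -> su_tm (S k) (sh_val c W) (sh_tm c t) = sh_tm c (su_tm k W t)) /\
  (forall v c k W, c <= k -> su_val (S k) (sh_val c W) (sh_val c v) = sh_val c (su_val k W v)) /\
  (forall e c k W, c <= k -> su_ctx (S k) (sh_val c W) (sh_ctx c e) = sh_ctx c (su_ctx k W e)).
Proof.
  apply vsyntax_ind; intros; cbn -[Nat.ltb Nat.eqb]; try solve_index; f_equal;
    repeat match goal with H : forall _, _ |- _ => rewrite <- H by lia; clear H end;
    try rewrite sh_val_comm by lia; reflexivity.
Qed.

Lemma su_sh :
  (forall t k W, su_tm k W (sh_tm k t) = t) /\
  (forall v k W, su_val k W (sh_val k v) = v) /\
  (forall e k W, su_ctx k W (sh_ctx k e) = e).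
Proof. apply vsyntax_ind; intros; cbn -[Nat.ltb Nat.eqb]; try solve_index; f_equal; auto. Qed.

Lemma su_var_sh :
  (forall t k, su_tm k (VVar k) (sh_tm (S k) t) = t) /\
  (forall v k, su_val k (VVar k) (sh_val (S k) v) = v) /\
  (forall e k, su_ctx k (VVar k) (sh_ctx (S k) e) = e).
Proof. apply vsyntax_ind; intros; cbn -[Nat.ltb Nat.eqb]; try solve_index; f_equal; auto. Qed.

Lemma sh_cat :
  (forall t c e, sh_tm c (cat_tm t e) = cat_tm (sh_tm c t) (sh_ctx c e)) /\
  (forall _ : vval, True) /\
  (forall e c e', sh_ctx c (cat_ctx e e') = cat_ctx (sh_ctx c e) (sh_ctx c e')).
Proof.
  apply vsyntax_ind; intros; cbn -[Nat.ltb Nat.eqb]; f_equal; auto;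
    rewrite_hyps; f_equal; apply sh_ctx_comm; lia.
Qed.

Scheme vstep_tm_mut_ind := Induction for vstep_tm Sort Prop
with vstep_val_mut_ind := Induction for vstep_val Sort Prop
with vstep_ctx_mut_ind := Induction for vstep_ctx Sort Prop.
Combined Scheme vstep_ind from vstep_tm_mut_ind, vstep_val_mut_ind, vstep_ctx_mut_ind.

Lemma vstep_sh :
  (forall t t', vstep_tm t t' -> forall c, vstep_tm (sh_tm c t) (sh_tm c t')) /\
  (forall v v', vstep_val v v' -> forall c, vstep_val (sh_val c v) (sh_val c v')) /\
  (forall e e', vstep_ctx e e' -> forall c, vstep_ctx (sh_ctx c e) (sh_ctx c e')).
Proof.
  apply vstep_ind; intros; cbn -[Nat.ltb]; try (constructor; auto; fail).
  destruct v as [M V N | V N]; cbn -[Nat.ltb]; apply vs_root.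
  - rewrite (proj1 sh_cat); cbn; rewrite sh_tm_comm by lia. apply root_Bv.
  - rewrite (proj1 sh_su) by lia. apply root_sigmav.
Qed.

Definition vstar_val : vval -> vval -> Prop := clos_refl_trans vval vstep_val.

Lemma clos_refl_trans_map {A B} (R : relation A) (S : relation B) (f : A -> B) :
  (forall x y, R x y -> S (f x) (f y)) ->
  forall x y, clos_refl_trans A R x y -> clos_refl_trans B S (f x) (f y).
Proof.
  intros Hf x y Hxy; induction Hxy; [apply rt_step, Hf; assumption | apply rt_refl |].
  eapply rt_trans; eassumption.
Qed.

Lemma vstar_root t t' : vroot t t' -> vstar t t'.
Proof. intros; apply rt_step, vs_root; assumption. Qed.

Lemma vstar_sh c t t' : vstar t t' -> vstar (sh_tm c t) (sh_tm c t').
Proof. apply clos_refl_trans_map; intros; apply vstep_sh; assumption. Qed.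

Lemma vstar_lam m m' : vstar m m' -> vstar_val (VLam m) (VLam m').
Proof. apply clos_refl_trans_map; intros; apply vs_lam; assumption. Qed.

Lemma vstar_cvl e v v' : vstar_val v v' -> vstar (Cv v e) (Cv v' e).
Proof. apply (clos_refl_trans_map _ _ (fun v => Cv v e)); intros; apply vs_cvl; assumption. Qed.

Lemma vstar_abs v m m' : vstar m m' -> vstar (Cv v (CAbs m)) (Cv v (CAbs m')).
Proof.
  apply (clos_refl_trans_map _ _ (fun m => Cv v (CAbs m))); intros; apply vs_cvr, vs_abs;
    assumption.
Qed.

Lemma vstar_pairl v m w w' : vstar_val w w' -> vstar (Cv v (CPair w m)) (Cv v (CPair w' m)).
Proof.
  apply (clos_refl_trans_map _ _ (fun w => Cv v (CPair w m))); intros; apply vs_cvr, vs_pairl;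
    assumption.
Qed.

Lemma vstar_pairr v w m m' : vstar m m' -> vstar (Cv v (CPair w m)) (Cv v (CPair w m')).
Proof.
  apply (clos_refl_trans_map _ _ (fun m => Cv v (CPair w m))); intros; apply vs_cvr, vs_pairr;
    assumption.
Qed.

Ltac size_lia :=
  cbn [lsize] in *; rewrite ?lsize_lshift in *; cbn [lsize] in *;
  repeat match goal with t : lterm |- _ =>
    lazymatch goal with _ : 1 <= lsize t |- _ => fail | _ => pose proof (lsize_pos t) end end;
  lia.

Lemma tr_fuel_irrelevant n m M K : lsize M <= n -> lsize M <= m -> tr n M K = tr m M K.
Proof.
  revert m M K; induction n as [|n IH]; intros [|m] M K Hn Hm; try (pose proof (lsize_pos M); lia).
  destruct M as [| | P Q | P Q]; cbn [tr]; [reflexivity | | destruct P, Q; cbn [is_value] | ];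
    repeat match goal with |- context [tr n ?A ?B] => rewrite (IH m A B) by size_lia end;
    reflexivity.
Qed.

(* [trk M K] is (M; x.K) and [tr_val V] is V° (junk [VVar 0] if [V] is not a value). *)
Definition trk (M : lterm) (K : vtm) : vtm := tr (lsize M) M K.

Definition tr_val (V : lterm) : vval :=
  match V with
  | LVar k => VVar k
  | LLam b => VLam (trk b (Up (VVar 0)))
  | _ => VVar 0
  end.

Lemma tr_fuel n M K : lsize M <= n -> tr n M K = trk M K.
Proof. intros; apply tr_fuel_irrelevant; auto. Qed.

Ltac fuel :=
  unfold trk at 1; cbn [lsize tr is_value];
  repeat match goal with |- context [tr ?n ?A ?B] =>
    lazymatch n with lsize A => fail | _ => rewrite (tr_fuel n A B) by size_lia end end;
  reflexivity.

Lemma trk_value V K : is_value V = true -> trk V K = Cv (tr_val V) (CAbs K).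
Proof. destruct V; intros; try discriminate; fuel. Qed.

Lemma trk_app_value V W K : is_value V = true -> is_value W = true ->
  trk (LApp V W) K = Cv (tr_val V) (CPair (tr_val W) K).
Proof. destruct V, W; intros; try discriminate; fuel. Qed.

Lemma trk_let M N K : trk (LLet M N) K = trk M (trk N (sh_tm 1 K)).
Proof. fuel. Qed.

Lemma trk_let1 M Q K : is_value M = false ->
  trk (LApp M Q) K = trk (LLet M (LApp (LVar 0) (lshift 0 Q))) K.
Proof. rewrite trk_let; destruct M, Q; intros; try discriminate; fuel. Qed.

Lemma trk_let2 V N K : is_value V = true -> is_value N = false ->
  trk (LApp V N) K = trk (LLet N (LApp (lshift 0 V) (LVar 0))) K.
Proof. rewrite trk_let; destruct V, N; intros; try discriminate; fuel. Qed.

Global Opaque trk.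

(* Follows the recursion of [tr], which translates a non-value application as its
   let-expansion: not a smaller term, but one whose immediate subterms are smaller. *)
Lemma let_expansion_ind (P : lterm -> Prop) :
  (forall n, P (LVar n)) ->
  (forall b, P b -> P (LLam b)) ->
  (forall V W, is_value V = true -> is_value W = true -> P V -> P W -> P (LApp V W)) ->
  (forall M N, P M -> P N -> P (LLet M N)) ->
  (forall M Q, is_value M = false ->
     P (LLet M (LApp (LVar 0) (lshift 0 Q))) -> P (LApp M Q)) ->
  (forall V N, is_value V = true -> is_value N = false ->
     P (LLet N (LApp (lshift 0 V) (LVar 0))) -> P (LApp V N)) ->
  forall M, P M.
Proof.
  intros Hvar Hlam Happ Hlet Hlet1 Hlet2 M.
  induction M as [M IH] using (induction_ltof1 _ lsize); unfold ltof in IH.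
  destruct M as [n | b | M Q | M N].
  - apply Hvar.
  - apply Hlam, IH; size_lia.
  - destruct (is_value M) eqn:HM; [destruct (is_value Q) eqn:HQ |].
    + apply Happ; auto; apply IH; size_lia.
    + pose proof (lsize_nonvalue _ HQ).
      apply Hlet2, Hlet; auto; apply IH; size_lia.
    + pose proof (lsize_nonvalue _ HM).
      apply Hlet1, Hlet; auto; apply IH; size_lia.
  - apply Hlet; apply IH; size_lia.
Qed.

Lemma trk_sh M :
  (forall c K, sh_tm c (trk M K) = trk (lshift c M) (sh_tm (S c) K)) /\
  (is_value M = true -> forall c, sh_val c (tr_val M) = tr_val (lshift c M)).
Proof.
  induction M as [n | b IHb | V W HV HW IHV IHW | M N IHM IHN | M Q HM IH | V N HV HN IH]
    using let_expansion_ind; split; intros; try discriminate.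
  - rewrite !trk_value by reflexivity. reflexivity.
  - reflexivity.
  - rewrite !trk_value by reflexivity. cbn. f_equal. f_equal. apply IHb.
  - cbn. f_equal. apply IHb.
  - cbn [lshift]. rewrite !trk_app_value by (rewrite ?is_value_lshift; assumption). cbn.
    rewrite (proj2 IHV), (proj2 IHW) by assumption. reflexivity.
  - cbn [lshift]. rewrite !trk_let, (proj1 IHM), (proj1 IHN), sh_tm_comm by lia. reflexivity.
  - cbn [lshift]. rewrite !trk_let1, (proj1 IH) by (rewrite ?is_value_lshift; assumption).
    cbn [lshift]. rewrite lshift_lshift by lia. reflexivity.
  - cbn [lshift]. rewrite !trk_let2, (proj1 IH) by (rewrite ?is_value_lshift; assumption).
    cbn [lshift]. rewrite lshift_lshift by lia. reflexivity.
Qed.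

Lemma tr_val_lshift V c : is_value V = true -> tr_val (lshift c V) = sh_val c (tr_val V).
Proof. intros HV; symmetry; apply (proj2 (trk_sh V)); assumption. Qed.

Lemma su_tm_sh1 W k K :
  su_tm (S (S k)) (sh_val 0 (sh_val 0 W)) (sh_tm 1 K) = sh_tm 1 (su_tm (S k) (sh_val 0 W) K).
Proof. rewrite <- (sh_val_comm W 0 0) by lia. apply (proj1 su_sh_le); lia. Qed.

Lemma trk_su M : forall k V, is_value V = true ->
  (forall K, su_tm k (tr_val V) (trk M K)
             = trk (lsubst k V M) (su_tm (S k) (sh_val 0 (tr_val V)) K)) /\
  (is_value M = true -> su_val k (tr_val V) (tr_val M) = tr_val (lsubst k V M)).
Proof.
  induction M as [n | b IHb | V W HV HW IHV IHW | M N IHM IHN | M Q HM IH | V N HV HN IH]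
    using let_expansion_ind; intros k X HX;
    assert (HX0 : is_value (lshift 0 X) = true) by (rewrite is_value_lshift; assumption);
    split; intros; try discriminate.
  - rewrite (trk_value (LVar n)), trk_value by (rewrite ?is_value_lsubst; auto).
    cbn [su_tm su_ctx]. f_equal. cbn [lsubst su_val tr_val].
    destruct (n <? k), (n =? k); reflexivity.
  - cbn [lsubst su_val tr_val]. destruct (n <? k), (n =? k); reflexivity.
  - rewrite (trk_value (LLam b)), trk_value by reflexivity. cbn. f_equal. f_equal.
    rewrite <- tr_val_lshift, (proj1 (IHb _ _ HX0)) by assumption. reflexivity.
  - cbn. f_equal. rewrite <- tr_val_lshift, (proj1 (IHb _ _ HX0)) by assumption. reflexivity.
  - cbn [lsubst]. rewrite !trk_app_value by (rewrite ?is_value_lsubst; assumption). cbn.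
    rewrite (proj2 (IHV _ _ HX)), (proj2 (IHW _ _ HX)) by assumption. reflexivity.
  - cbn [lsubst]. rewrite !trk_let, (proj1 (IHM _ _ HX)), <- tr_val_lshift by assumption.
    rewrite (proj1 (IHN _ _ HX0)), tr_val_lshift, su_tm_sh1 by assumption. reflexivity.
  - cbn [lsubst]. rewrite !trk_let1, (proj1 (IH _ _ HX)) by (rewrite ?is_value_lsubst; assumption).
    cbn [lsubst]. rewrite lshift_lsubst_le by lia. reflexivity.
  - cbn [lsubst]. rewrite !trk_let2, (proj1 (IH _ _ HX)) by (rewrite ?is_value_lsubst; assumption).
    cbn [lsubst]. rewrite lshift_lsubst_le by lia. reflexivity.
Qed.

Lemma trk_cat M L e : cat_tm (trk M L) e = trk M (cat_tm L (sh_ctx 0 e)).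
Proof.
  revert L e.
  induction M as [n | b IHb | V W HV HW IHV IHW | M N IHM IHN | M Q HM IH | V N HV HN IH]
    using let_expansion_ind; intros L e.
  - rewrite !trk_value by reflexivity. reflexivity.
  - rewrite !trk_value by reflexivity. reflexivity.
  - rewrite !trk_app_value by assumption. reflexivity.
  - rewrite !trk_let, IHM, IHN, (proj1 sh_cat), sh_ctx_comm by lia. reflexivity.
  - rewrite !trk_let1 by assumption. apply IH.
  - rewrite !trk_let2 by assumption. apply IH.
Qed.

Lemma trk_vstar M K K' : vstar K K' -> vstar (trk M K) (trk M K').
Proof.
  revert K K'.
  induction M as [n | b IHb | V W HV HW IHV IHW | M N IHM IHN | M Q HM IH | V N HV HN IH]
    using let_expansion_ind; intros K K' HK.
  - rewrite !trk_value by reflexivity. apply vstar_abs, HK.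
  - rewrite !trk_value by reflexivity. apply vstar_abs, HK.
  - rewrite !trk_app_value by assumption. apply vstar_pairr, HK.
  - rewrite !trk_let. apply IHM, IHN, vstar_sh, HK.
  - rewrite !trk_let1 by assumption. apply IH, HK.
  - rewrite !trk_let2 by assumption. apply IH, HK.
Qed.

Lemma trk_letv V M K : is_value V = true -> vstar (trk (LLet V M) K) (trk (lsubst 0 V M) K).
Proof.
  intros HV. rewrite trk_let, trk_value by assumption.
  eapply rt_trans; [apply vstar_root, root_sigmav |].
  rewrite (proj1 (trk_su M 0 V HV)), (proj1 su_sh). apply rt_refl.
Qed.

Lemma trk_let1_vstar M Q K :
  vstar (trk (LLet M (LApp (LVar 0) (lshift 0 Q))) K) (trk (LApp M Q) K).
Proof.
  destruct (is_value M) eqn:HM.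
  - eapply rt_trans; [apply trk_letv; assumption |].
    cbn [lsubst Nat.ltb Nat.leb Nat.eqb]. rewrite lsubst_lshift. apply rt_refl.
  - rewrite trk_let1 by assumption. apply rt_refl.
Qed.

Lemma trk_let2_vstar V N K : is_value V = true ->
  vstar (trk (LLet N (LApp (lshift 0 V) (LVar 0))) K) (trk (LApp V N) K).
Proof.
  intros HV. destruct (is_value N) eqn:HN.
  - eapply rt_trans; [apply trk_letv; assumption |].
    cbn [lsubst Nat.ltb Nat.leb Nat.eqb]. rewrite lsubst_lshift. apply rt_refl.
  - rewrite trk_let2 by assumption. apply rt_refl.
Qed.

Lemma trk_eta M K : vstar (trk M (Cv (VVar 0) (CAbs (sh_tm 1 K)))) (trk M K).
Proof.
  apply trk_vstar, vstar_root. rewrite <- (proj1 su_var_sh K 0) at 2. apply root_sigmav.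
Qed.

Lemma trk_eta_let M K : vstar (trk (LLet M (LVar 0)) K) (trk M K).
Proof. rewrite trk_let, (trk_value (LVar 0)) by reflexivity. apply trk_eta. Qed.

Lemma cat_trk_eta M K : vstar (cat_tm (trk M (Up (VVar 0))) (CAbs K)) (trk M K).
Proof. rewrite trk_cat. apply trk_eta. Qed.

Lemma trk_beta_value b W K : is_value W = true ->
  vstar (trk (LApp (LLam b) W) K) (trk (LLet W b) K).
Proof.
  intros HW. rewrite trk_app_value, trk_let, (trk_value W) by auto.
  eapply rt_trans; [apply vstar_root, root_Bv |]. apply vstar_abs, cat_trk_eta.
Qed.

(* For a non-value argument, the redex created by the let-expansion has argument [LVar 0]. *)
Lemma trk_beta b N K : vstar (trk (LApp (LLam b) N) K) (trk (LLet N b) K).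
Proof.
  destruct (is_value N) eqn:HN; [apply trk_beta_value; assumption |].
  rewrite trk_let2, !trk_let by auto. apply trk_vstar. cbn [lshift].
  eapply rt_trans; [apply trk_beta_value; reflexivity |].
  eapply rt_trans; [apply trk_letv; reflexivity |].
  rewrite lsubst_var_lshift. apply rt_refl.
Qed.

Lemma trk_assoc M N P K :
  trk (LLet (LLet M N) P) K = trk (LLet M (LLet N (lshift 1 P))) K.
Proof. rewrite !trk_let, (proj1 (trk_sh P)), sh_tm_comm by lia. reflexivity. Qed.

Lemma lstep_lshift R M N : lstep R M N -> forall c, lstep R (lshift c M) (lshift c N).
Proof.
  induction 1 as [M N Hroot | | | | |]; intros c; cbn [lshift];
    [apply ls_root | apply ls_lam | apply ls_appl | apply ls_appr | apply ls_letl | apply ls_letr];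
    auto.
  destruct Hroot; cbn [lshift].
  - apply root_B.
  - rewrite lshift_lsubst_ge by lia. apply root_letv. rewrite is_value_lshift; assumption.
  - apply root_eta.
  - rewrite lshift_lshift by lia. apply root_assoc.
  - rewrite lshift_lshift by lia. apply root_let1. rewrite is_value_lshift; assumption.
  - rewrite lshift_lshift by lia. apply root_let2; rewrite is_value_lshift; assumption.
Qed.

Lemma lroot_nonvalue R M N : lroot R M N -> is_value M = false.
Proof. destruct 1; reflexivity. Qed.

Lemma lstep_value R V N : lstep R V N -> is_value V = true -> is_value N = true.
Proof.
  destruct 1 as [M N Hroot | | | | |]; intros HV; try discriminate; [| reflexivity].
  rewrite (lroot_nonvalue _ _ _ Hroot) in HV; discriminate.
Qed.

Lemma lstep_is_value_permutative R M N : R = Rlet1 \/ R = Rlet2 \/ R = Rassoc ->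
  lstep R M N -> is_value N = is_value M.
Proof.
  intros HR; destruct 1 as [M N Hroot | | | | |]; try reflexivity.
  destruct Hroot; try reflexivity; exfalso; intuition discriminate.
Qed.

Definition simulates (M N : lterm) : Prop :=
  (forall K, vstar (trk M K) (trk N K)) /\
  (is_value M = true -> vstar_val (tr_val M) (tr_val N)).

Lemma lroot_simulates R M N : R = RB \/ R = Rletv \/ R = Retalet -> lroot R M N -> simulates M N.
Proof.
  intros HR Hroot; split; [intros K | rewrite (lroot_nonvalue _ _ _ Hroot); discriminate].
  destruct Hroot; try (exfalso; intuition discriminate).
  - apply trk_beta.
  - apply trk_letv; assumption.
  - apply trk_eta_let.
Qed.

Lemma lstep_simulates R M N : R = RB \/ R = Rletv \/ R = Retalet -> lstep R M N -> simulates M N.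
Proof.
  intros HR; revert N.
  induction M as [n | b IHb | V W HV HW IHV IHW | M X IHM IHX | M Q HM IH | V N HV HN IH]
    using let_expansion_ind; intros N' Hstep;
    inversion Hstep as [? ? Hroot | b1 b' Hb | P P' Q0 HP | P Q0 Q' HQ | A A' B HA | A B B' HB];
    subst; try (apply lroot_simulates with R; assumption);
    try (split; [intros K | discriminate]).
  - assert (Hval : vstar_val (tr_val (LLam b)) (tr_val (LLam b')))
      by exact (vstar_lam _ _ (proj1 (IHb _ Hb) (Up (VVar 0)))).
    split; [intros K; rewrite !trk_value by reflexivity; apply vstar_cvl |]; auto.
  - rewrite !trk_app_value by eauto using lstep_value. apply vstar_cvl, (proj2 (IHV _ HP) HV).
  - rewrite !trk_app_value by eauto using lstep_value. apply vstar_pairl, (proj2 (IHW _ HQ) HW).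
  - rewrite !trk_let. apply (IHM _ HA).
  - rewrite !trk_let. apply trk_vstar, (IHX _ HB).
  - rewrite trk_let1 by assumption.
    eapply rt_trans; [apply IH, ls_letl, HP | apply trk_let1_vstar].
  - rewrite !trk_let1 by assumption. apply IH, ls_letr, ls_appr, lstep_lshift, HQ.
  - rewrite !trk_let2 by eauto using lstep_value. apply IH, ls_letr, ls_appl, lstep_lshift, HP.
  - rewrite trk_let2 by assumption.
    eapply rt_trans; [apply IH, ls_letl, HQ | apply trk_let2_vstar; assumption].
Qed.

Definition same_translation (M N : lterm) : Prop :=
  (forall K, trk M K = trk N K) /\ (is_value M = true -> tr_val M = tr_val N).

Lemma lroot_same_translation R M N : R = Rlet1 \/ R = Rlet2 \/ R = Rassoc ->
  lroot R M N -> same_translation M N.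
Proof.
  intros HR Hroot; split; [intros K | rewrite (lroot_nonvalue _ _ _ Hroot); discriminate].
  destruct Hroot; try (exfalso; intuition discriminate).
  - apply trk_assoc.
  - apply trk_let1; assumption.
  - apply trk_let2; assumption.
Qed.

Lemma lstep_same_translation R M N : R = Rlet1 \/ R = Rlet2 \/ R = Rassoc ->
  lstep R M N -> same_translation M N.
Proof.
  intros HR; revert N.
  induction M as [n | b IHb | V W HV HW IHV IHW | M X IHM IHX | M Q HM IH | V N HV HN IH]
    using let_expansion_ind; intros N' Hstep;
    assert (Hval := lstep_is_value_permutative _ _ _ HR Hstep);
    inversion Hstep as [? ? Hroot | b1 b' Hb | P P' Q0 HP | P Q0 Q' HQ | A A' B HA | A B B' HB];
    subst; try (apply lroot_same_translation with R; assumption);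
    try (split; [intros K | discriminate]).
  - assert (Hbody := proj1 (IHb _ Hb) (Up (VVar 0))).
    split; [intros K; rewrite !trk_value by reflexivity |]; cbn; rewrite Hbody; reflexivity.
  - rewrite !trk_app_value, (proj2 (IHV _ HP) HV) by eauto using lstep_value. reflexivity.
  - rewrite !trk_app_value, (proj2 (IHW _ HQ) HW) by eauto using lstep_value. reflexivity.
  - rewrite !trk_let. apply (IHM _ HA).
  - rewrite !trk_let, (proj1 (IHX _ HB)). reflexivity.
  - rewrite !trk_let1 by eauto using lstep_is_value_permutative. apply IH, ls_letl, HP.
  - rewrite !trk_let1 by assumption. apply IH, ls_letr, ls_appr, lstep_lshift, HQ.
  - rewrite !trk_let2 by eauto using lstep_value. apply IH, ls_letr, ls_appl, lstep_lshift, HP.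
  - rewrite !trk_let2 by eauto using lstep_is_value_permutative. apply IH, ls_letl, HQ.
Qed.

Theorem theorem1 :
  (forall (R : lrule) (M N : lterm),
      (R = RB \/ R = Rletv \/ R = Retalet) ->
      lstep R M N -> vstar (bullet M) (bullet N)) /\
  (forall (R : lrule) (M N : lterm),
      (R = Rlet1 \/ R = Rlet2 \/ R = Rassoc) ->
      lstep R M N -> bullet M = bullet N).
Proof.
  split; intros R M N HR Hstep.
  - exact (proj1 (lstep_simulates R M N HR Hstep) (Up (VVar 0))).
  - exact (proj1 (lstep_same_translation R M N HR Hstep) (Up (VVar 0))).
Qed.
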